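(* Let $X$ be a complex vector space equipped with an inner product $\langle\cdot,\cdot\rangle'$. Suppose that for each $\alpha\in(0,1]$ we are given a map $\langle\cdot,\cdot\rangle_\alpha : X\times X\to\mathbb{C}$ and real constants $A_\alpha,B_\alpha$ with $0<A_\alpha\le B_\alpha<\infty$ such that for all $x,y\in X$ and all $\alpha\in(0,1]$, \[ A_\alpha\,|\langle x,y\rangle'| \le |\langle x,y\rangle_\alpha| \le B_\alpha\,|\langle x,y\rangle'|, \] and suppose moreover that $\sup_{\alpha\in(0,1]} B_\alpha/A_\alpha<\infty$. Then there exists $M\in[1,\infty)$ such that for every $\alpha\in(0,1]$, all $x,y,z\in X$ and all $k\in\mathbb{C}$: 1. $\frac{|k|}{M}|\langle x,y\rangle_\alpha|\le|\langle kx,y\rangle_\alpha|\le |k|M|\langle x,y\rangle_\alpha|$; 2. $\frac{|k|}{M}|\langle x,y\rangle_\alpha|\le|\langle x,ky\rangle_\alpha|\le |k|M|\langle x,y\rangle_\alpha|$; 3. $\frac{|k|}{M}|\langle y,x\rangle_\alpha|\le|\langle kx,y\rangle_\alpha|\le |k|M|\langle y,x\rangle_\alpha|$; 4. $\frac{|k|}{M}|\langle y,x\rangle_\alpha|\le|\langle x,ky\rangle_\alpha|\le |k|M|\langle y,x\rangle_\alpha|$; 5. $\frac{1}{M}|\langle x,ky\rangle_\alpha|\le|\langle kx,y\rangle_\alpha|\le M|\langle x,ky\rangle_\alpha|$; 6. $\frac{1}{M}|\langle kx,y\rangle_\alpha|\le|\langle x,ky\rangle_\alpha|\le M|\langle kx,y\rangle_\alpha|$;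 7. $\frac{1}{M}|\langle ky,x\rangle_\alpha|\le|\langle kx,y\rangle_\alpha|\le M|\langle ky,x\rangle_\alpha|$; 8. $\frac{1}{M}|\langle ky,x\rangle_\alpha|\le|\langle x,ky\rangle_\alpha|\le M|\langle ky,x\rangle_\alpha|$; 9. $|\langle kx+z,y\rangle_\alpha|\le M\big(|k|\,|\langle x,y\rangle_\alpha|+|\langle z,y\rangle_\alpha|\big)$; 10. $|\langle x,ky+z\rangle_\alpha|\le M\big(|k|\,|\langle x,y\rangle_\alpha|+|\langle x,z\rangle_\alpha|\big)$.
   Context: The map $\langle\cdot,\cdot\rangle_\alpha$ satisfying the two-sided bound is the paper's (simplified) ''fuzzy inner product'' relative to the classical inner product $\langle\cdot,\cdot\rangle'$. *)

From mathcomp Require Import all_boot all_order all_algebra.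
From mathcomp Require Import reals complex.
Import GRing.Theory Num.Theory.
Local Open Scope ring_scope.
Local Open Scope complex_scope.

Definition is_inner_product {R : realType} {V : lmodType R[i]}
  (ip : V -> V -> R[i]) : Prop :=
  [/\ forall (a : R[i]) (x y z : V), ip (a *: x + y) z = a * ip x z + ip y z,
      forall x y : V, ip y x = (ip x y)^*,
      forall x : V, 0 <= ip x x
    & forall x : V, ip x x = 0 -> x = 0].

From mathcomp Require Import all_boot all_order all_algebra.
From mathcomp Require Import reals complex.
Import Order.TTheory GRing.Theory Num.Theory.
Local Open Scope ring_scope.
Local Open Scope complex_scope.

(* If p and q both lie between a c and b c for the same c >= 0, and b <= m a,
   then each is within the factor m of the other.  The modulus of a classical
   inner product is absolutely homogeneous in each argument, symmetric and
   subadditive, so all ten bounds reduce to this with c = |<u, v>'|, and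
   M := max 1 (sup B/A) works for every alpha at once. *)

Section Pinching.
Context {F : numFieldType} {a b m : F}.
Hypotheses (m_gt0 : 0 < m) (b_le_ma : b <= m * a).

Lemma pinched_upper {c p : F} : 0 <= c -> p <= b * c -> p <= m * (a * c).
Proof.
by move=> c_ge0 /le_trans; apply; rewrite mulrA ler_wpM2r.
Qed.

Lemma pinched_ratio {c p q : F} : 0 <= c ->
  a * c <= p <= b * c -> a * c <= q <= b * c -> q / m <= p <= m * q.
Proof.
move=> c_ge0 /andP[ac_le_p p_le_bc] /andP[ac_le_q q_le_bc].
rewrite ler_pdivrMr // mulrC; apply/andP; split.
  exact: le_trans (pinched_upper c_ge0 q_le_bc) (ler_wpM2l (ltW m_gt0) ac_le_p).
exact: le_trans (pinched_upper c_ge0 p_le_bc) (ler_wpM2l (ltW m_gt0) ac_le_q).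
Qed.

Lemma pinched_ratio_scaled {k c p q : F} : 0 <= k -> 0 <= c ->
  a * (k * c) <= p <= b * (k * c) -> a * c <= q <= b * c ->
  k / m * q <= p <= k * m * q.
Proof.
move=> k_ge0 c_ge0 p_pinched /andP[ac_le_q q_le_bc].
have kq_pinched : a * (k * c) <= k * q <= b * (k * c).
  by rewrite !(mulrCA _ k) !ler_wpM2l.
rewrite mulrAC (mulrAC k m q) (mulrC _ m).
exact: pinched_ratio (mulr_ge0 k_ge0 c_ge0) p_pinched kq_pinched.
Qed.

Lemma pinched_subadd {k c1 c2 p q1 q2 : F} : 0 <= k -> 0 <= c1 -> 0 <= c2 ->
  p <= b * (k * c1 + c2) -> a * c1 <= q1 -> a * c2 <= q2 ->
  p <= m * (k * q1 + q2).
Proof.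
move=> k_ge0 c1_ge0 c2_ge0 p_le /(ler_wpM2l k_ge0) ac1_le ac2_le.
have s_ge0 : 0 <= k * c1 + c2 by rewrite addr_ge0 ?mulr_ge0.
rewrite (le_trans (pinched_upper s_ge0 p_le)) // ler_wpM2l ?(ltW m_gt0) //.
by rewrite mulrDr mulrCA; apply: lerD.
Qed.

End Pinching.

Section ClassicalInnerProduct.
Context {R : realType} {X : lmodType R[i]} {ip : X -> X -> R[i]}.
Hypothesis ip_inner : is_inner_product ip.

Lemma ip0l (y : X) : ip 0 y = 0.
Proof.
case: ip_inner => lin _ _ _.
have := lin 1 0 0 y; rewrite scale1r addr0 mul1r => ip0_twice.
by apply: (@addrI _ (ip 0 y)); rewrite addr0 -ip0_twice.
Qed.

Lemma ipZl (k : R[i]) (x y : X) : ip (k *: x) y = k * ip x y.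
Proof.
by case: ip_inner => lin _ _ _; rewrite -[k *: x]addr0 lin ip0l addr0.
Qed.

Lemma norm_ipC (x y : X) : `|ip y x| = `|ip x y|.
Proof. by case: ip_inner => _ sym _ _; rewrite sym normcJ. Qed.

Lemma norm_ipZl (k : R[i]) (x y : X) : `|ip (k *: x) y| = `|k| * `|ip x y|.
Proof. by rewrite ipZl normrM. Qed.

Lemma norm_ipZr (k : R[i]) (x y : X) : `|ip x (k *: y)| = `|k| * `|ip x y|.
Proof. by rewrite norm_ipC norm_ipZl norm_ipC. Qed.

Lemma norm_ipDl (k : R[i]) (x z y : X) :
  `|ip (k *: x + z) y| <= `|k| * `|ip x y| + `|ip z y|.
Proof.
by case: ip_inner => lin _ _ _; rewrite lin -normrM ler_normD.
Qed.

Lemma norm_ipDr (k : R[i]) (x y z : X) :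
  `|ip x (k *: y + z)| <= `|k| * `|ip x y| + `|ip x z|.
Proof. by rewrite norm_ipC (norm_ipC y) (norm_ipC z) norm_ipDl. Qed.

End ClassicalInnerProduct.

Section FuzzyInnerProduct.
Context {R : realType} {X : lmodType R[i]} {ip' ip : X -> X -> R[i]} {a b m : R}.
Hypotheses (b_ge0 : 0 <= b) (m_gt0 : 0 < m) (b_le_ma : b <= m * a).
Hypothesis ip_pinched : forall x y : X,
  a%:C * `|ip' x y| <= `|ip x y| <= b%:C * `|ip' x y|.

Let mC_gt0 : 0 < m%:C. Proof. by rewrite ltcR. Qed.
Let bC_le_maC : b%:C <= m%:C * a%:C. Proof. by rewrite -rmorphM lecR. Qed.

Lemma fuzzy_norm_ratio (u v u' v' : X) : `|ip' u v| = `|ip' u' v'| ->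
  `|ip u' v'| / m%:C <= `|ip u v| <= m%:C * `|ip u' v'|.
Proof.
move=> eq_uv; have := ip_pinched u v; rewrite eq_uv => uv_pinched.
exact: (pinched_ratio mC_gt0 bC_le_maC (normr_ge0 _) uv_pinched
  (ip_pinched u' v')).
Qed.

Lemma fuzzy_norm_ratio_scaled (k : R[i]) (u v u' v' : X) :
  `|ip' u v| = `|k| * `|ip' u' v'| ->
  `|k| / m%:C * `|ip u' v'| <= `|ip u v| <= `|k| * m%:C * `|ip u' v'|.
Proof.
move=> eq_uv; have := ip_pinched u v; rewrite eq_uv => uv_pinched.
exact: (pinched_ratio_scaled mC_gt0 bC_le_maC (normr_ge0 _) (normr_ge0 _)
  uv_pinched (ip_pinched u' v')).
Qed.

Lemma fuzzy_norm_subadd (k : R[i]) (u v x1 y1 x2 y2 : X) :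
  `|ip' u v| <= `|k| * `|ip' x1 y1| + `|ip' x2 y2| ->
  `|ip u v| <= m%:C * (`|k| * `|ip x1 y1| + `|ip x2 y2|).
Proof.
move=> uv_le; have /andP[_ uv_upper] := ip_pinched u v.
have /andP[xy1_lower _] := ip_pinched x1 y1.
have /andP[xy2_lower _] := ip_pinched x2 y2.
apply: (pinched_subadd mC_gt0 bC_le_maC (normr_ge0 _) (normr_ge0 _)
  (normr_ge0 _) _ xy1_lower xy2_lower).
by rewrite (le_trans uv_upper) // ler_wpM2l ?ler0c.
Qed.

End FuzzyInnerProduct.
Theorem mainTheorem5 (R : realType) (X : lmodType R[i])
  (ip' : X -> X -> R[i]) (ip : R -> X -> X -> R[i]) (A B : R -> R) :
  is_inner_product ip' ->
  (forall a : R, 0 < a <= 1 -> 0 < A a <= B a) ->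
  (forall a : R, 0 < a <= 1 -> forall x y : X,
     (A a)%:C * `|ip' x y| <= `|ip a x y| <= (B a)%:C * `|ip' x y|) ->
  (exists K : R, forall a : R, 0 < a <= 1 -> B a / A a <= K) ->
  exists M : R, 1 <= M /\
    forall a : R, 0 < a <= 1 -> forall (x y z : X) (k : R[i]),
    (`|k| / M%:C * `|ip a x y| <= `|ip a (k *: x) y| <= `|k| * M%:C * `|ip a x y|) /\
        (`|k| / M%:C * `|ip a x y| <= `|ip a x (k *: y)| <= `|k| * M%:C * `|ip a x y|) /\
        (`|k| / M%:C * `|ip a y x| <= `|ip a (k *: x) y| <= `|k| * M%:C * `|ip a y x|) /\
        (`|k| / M%:C * `|ip a y x| <= `|ip a x (k *: y)| <= `|k| * M%:C * `|ip a y x|) /\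
        (`|ip a x (k *: y)| / M%:C <= `|ip a (k *: x) y| <= M%:C * `|ip a x (k *: y)|) /\
        (`|ip a (k *: x) y| / M%:C <= `|ip a x (k *: y)| <= M%:C * `|ip a (k *: x) y|) /\
        (`|ip a (k *: y) x| / M%:C <= `|ip a (k *: x) y| <= M%:C * `|ip a (k *: y) x|) /\
        (`|ip a (k *: y) x| / M%:C <= `|ip a x (k *: y)| <= M%:C * `|ip a (k *: y) x|) /\
        (`|ip a (k *: x + z) y| <= M%:C * (`|k| * `|ip a x y| + `|ip a z y|)) /\
      (`|ip a x (k *: y + z)| <= M%:C * (`|k| * `|ip a x y| + `|ip a x z|)).
Proof.
move=> ip'_inner AB_bounds ip_pinched [K ratio_le_K].
have M_ge1 : 1 <= Num.max 1 K by rewrite le_max lexx.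
exists (Num.max 1 K); split => // alpha alpha_in x y z k.
have /andP[A_gt0 A_le_B] := AB_bounds alpha alpha_in.
have M_gt0 : 0 < Num.max 1 K := lt_le_trans ltr01 M_ge1.
have B_le_MA : B alpha <= Num.max 1 K * A alpha.
  by rewrite -ler_pdivrMr // (le_trans (ratio_le_K alpha alpha_in)) // le_max lexx orbT.
have B_ge0 : 0 <= B alpha := le_trans (ltW A_gt0) A_le_B.
have ratio := fuzzy_norm_ratio M_gt0 B_le_MA (ip_pinched alpha alpha_in).
have ratio_scaled := fuzzy_norm_ratio_scaled M_gt0 B_le_MA (ip_pinched alpha alpha_in).
have subadd := fuzzy_norm_subadd B_ge0 M_gt0 B_le_MA (ip_pinched alpha alpha_in).
have normZl := norm_ipZl ip'_inner; have normZr := norm_ipZr ip'_inner.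
have normC := norm_ipC ip'_inner.
split; first by apply: ratio_scaled; rewrite normZl.
split; first by apply: ratio_scaled; rewrite normZr.
split; first by apply: ratio_scaled; rewrite normZl normC.
split; first by apply: ratio_scaled; rewrite normZr normC.
split; first by apply: ratio; rewrite normZl normZr.
split; first by apply: ratio; rewrite normZl normZr.
split; first by apply: ratio; rewrite !normZl normC.
split; first by apply: ratio; rewrite normC.
split; first by apply: subadd; rewrite norm_ipDl.
by apply: subadd; rewrite norm_ipDr.
Qed.
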